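(* Let $m\ge1$, $C_m$ cyclic with generator $c$, and for $d\mid m$ let $\zeta_d$ be a primitive $d$th root of unity. Consider the Wedderburn isomorphism $\omega_{\mathbb{Q},m}\colon\mathbb{Q}C_m\to\prod_{d\mid m}\mathbb{Q}(\zeta_d)$, $c\mapsto(\zeta_d)_{d\mid m}$. Given, for each $d\mid m$, an element $a_d(c)=\sum_{i\in\mathbb{Z}/m}a_{d,i}c^i\in\mathbb{Q}C_m$, write $a_d(\zeta_d)=\sum_{i\in\mathbb{Z}/m}a_{d,i}\zeta_d^i$. Then \[ \omega_{\mathbb{Q},m}^{-1}\bigl((a_d(\zeta_d))_{d\mid m}\bigr)=\frac1m\sum_{l\in\mathbb{Z}/m}c^l\Bigl[\sum_{d\mid m}d\sum_{k\in\mathbb{Z}/(m/d')}a_{d,\,l-kd'}\prod_{p\mid d,\ p\nmid k}\Bigl(-\frac1p\Bigr)\prod_{p\mid d,\ p\mid k}\Bigl(1-\frac1p\Bigr)\Bigr], \] where for $d\mid m$ the divisor $d'\mid m$ is defined by $v_p(d')=\max(v_p(d)-1,0)$ for all primes $p$, and the products run over primes $p$.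
   Context: $v_p$ is the $p$-adic valuation. For $p\mid d$ one has $p\mid m/d'$, so divisibility of $k\in\mathbb{Z}/(m/d')$ by $p$ is well defined, and $l-kd'$ is well defined in $\mathbb{Z}/m$. *)

From HB Require Import structures.
From mathcomp Require Import all_boot all_order all_algebra all_field.
Set Implicit Arguments. Unset Strict Implicit. Unset Printing Implicit Defensive.
Import Order.TTheory GRing.Theory Num.Theory.
Local Open Scope ring_scope.

(* An element of the group algebra Q C_m is represented by its coefficient
   function  i |-> coefficient of c^i, for i in Z/m = {0,...,m-1}
   (only the values at i < m are used). *)

(* Component at d of the Wedderburn map omega_{Q,m} : Q C_m -> prod_{d|m} Q(zeta_d),
   c |-> (zeta_d)_d, where zeta d is the chosen primitive d-th root of unity
   (Q(zeta_d) is viewed inside algC). *)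
Definition omega_comp (m : nat) (zeta : nat -> algC) (y : nat -> rat) (d : nat)
  : algC := \sum_(i < m) ratr (y i) * zeta d ^+ i.

Definition dprime (d : nat) : nat := \prod_(p <- primes d) p ^ (logn p d - 1).

(* The right-hand side of the formula: coefficient of c^l, l in Z/m.
   The index l - k d' in Z/m is represented by (l + m - k d') mod m
   (note k d' < m since k < m/d'). *)
Definition inv_formula (m : nat) (a : nat -> nat -> rat) (l : nat) : rat :=
  m%:R^-1 *
  \sum_(d <- divisors m)
    d%:R * \sum_(k < m %/ dprime d)
       a d ((l + m - k * dprime d) %% m)%N
       * \prod_(p <- primes d | ~~ (p %| k)%N) (- p%:R^-1)
       * \prod_(p <- primes d | (p %| k)%N) (1 - p%:R^-1).

From HB Require Import structures.
From mathcomp Require Import all_boot all_order all_algebra all_field.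
From mathcomp Require Import ring.
Import Order.TTheory GRing.Theory Num.Theory.

Set Implicit Arguments.
Unset Strict Implicit.
Unset Printing Implicit Defensive.

(* Evaluate the right-hand side at a primitive d0-th root of unity z.  After
   shifting the index l, the coefficient of a_d(z) is
   d * sum_(k < m/d') w_d(k) z^(k d'), with w_d(k) the product of the factors
   -1/p and 1 - 1/p.  Since d = d' rad(d), one has
   rad(d) w_d(k) = prod_(p | d) (p [p | k] - 1), the Ramanujan sum c_rad(d)(k),
   and summing it against the powers of a root of unity u picks out exactly
   the u of order rad(d): split off the multiples of one prime at a time.
   For u = z^d', of order d0 / gcd(d', d0), this happens iff d = d0, so the
   coefficient is m [d = d0]. *)

Definition rad (d : nat) : nat := \prod_(p <- primes d) p.

Lemma rad_gt0 d : 0 < rad d.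
Proof.
rewrite /rad big_seq_cond prodn_cond_gt0 // => p.
by rewrite mem_primes => /andP[/andP[/prime_gt0]].
Qed.

Lemma dprime_gt0 d : 0 < dprime d.
Proof.
rewrite /dprime big_seq_cond prodn_cond_gt0 // => p.
by rewrite mem_primes expn_gt0 => /andP[/andP[/prime_gt0 ->]].
Qed.

Lemma mul_dprime_rad d : 0 < d -> dprime d * rad d = d.
Proof.
move=> d_gt0; rewrite /dprime /rad -big_split /=.
rewrite [RHS]prod_prime_decomp // prime_decompE big_map /=.
apply: eq_big_seq => p; rewrite -logn_gt0 => logn_gt0.
by rewrite subn1 -expnSr prednK.
Qed.

Lemma dvdn_rad p d : p \in primes d -> p %| rad d.
Proof. by move=> p_d; rewrite /rad (big_rem p) //= dvdn_mulr. Qed.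

Lemma coprime_rad_dvdn_eq1 r d : 0 < d -> r %| d -> coprime r (rad d) -> r = 1.
Proof.
move=> d_gt0 r_d r_rad; have r_gt0 := dvdn_gt0 d_gt0 r_d.
case: (ltngtP r 1) => [|r_gt1|//]; first by rewrite ltnS leqn0 => /eqP r0; rewrite r0 in r_gt0.
have q_r := pdiv_dvd r; have q_prime := pdiv_prime r_gt1.
have q_rad : pdiv r %| rad d.
  by apply: dvdn_rad; rewrite mem_primes q_prime d_gt0 (dvdn_trans q_r).
have := coprime_dvdr q_rad (coprime_dvdl q_r r_rad).
by rewrite /coprime gcdnn => /eqP q1; rewrite q1 in q_prime.
Qed.

Lemma divn_gcdn_dprime_eq_rad d0 d : 0 < d0 -> 0 < d ->
  (d0 %/ gcdn (dprime d) d0 == rad d) = (d0 == d).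
Proof.
move=> d0_gt0 d_gt0; have dE := mul_dprime_rad d_gt0.
apply/eqP/eqP=> [d0E|->]; last first.
  rewrite (gcdn_idPl _); last by rewrite -{2}dE dvdn_mulr.
  by rewrite -{1}dE mulKn ?dprime_gt0.
set g := gcdn (dprime d) d0 in d0E.
have g_gt0 : 0 < g by rewrite gcdn_gt0 d0_gt0 orbT.
have {}d0E : d0 = rad d * g by rewrite -d0E divnK // dvdn_gcdr.
have d0_d : d0 %| d by rewrite -dE d0E mulnC dvdn_mul ?dvdn_gcdl.
set r := d %/ d0; have rE : d = r * d0 by rewrite divnK.
have dprimeE : dprime d = r * g.
  by apply/eqP; rewrite -(eqn_pmul2r (rad_gt0 d)) dE {1}rE d0E mulnCA mulnC.
have : gcdn r (rad d) * g = 1 * g by rewrite muln_gcdl -dprimeE -d0E mul1n.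
move/eqP; rewrite eqn_pmul2r // => r_rad.
by rewrite rE (coprime_rad_dvdn_eq1 d_gt0 _ r_rad) ?mul1n // rE dvdn_mulr.
Qed.

Lemma divn_gcdn_prime_eq p k n : prime p -> ~~ (p %| n) ->
  (k %/ gcdn p k == n) = (k == p * n) + (k == n) :> nat.
Proof.
move=> p_prime p_n; have [p_k|p_k] := boolP (p %| k).
  have -> : (k == n) = false by apply: contraNF p_n => /eqP <-.
  by rewrite (gcdn_idPl p_k) addn0 mulnC eqn_mul ?prime_gt0.
have -> : (k == p * n) = false by apply: contraNF p_k => /eqP ->; rewrite dvdn_mulr.
by move: p_k; rewrite -prime_coprime // => /eqP ->; rewrite divn1.
Qed.

Lemma prime_dvdn_prod p s : prime p -> all prime s ->
  (p %| \prod_(q <- s) q) = (p \in s).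
Proof.
move=> p_prime; elim: s => [|q s IHs] /=.
  by rewrite big_nil dvdn1 in_nil; case: eqP p_prime => // ->.
move=> /andP[q_prime s_prime].
by rewrite big_cons Euclid_dvdM // dvdn_prime2 // in_cons IHs.
Qed.

Lemma big_ord_dvdn {T : Type} {idx : T} {op : Monoid.law idx} (F : nat -> T) p M :
  0 < p -> \big[op/idx]_(i < M * p | p %| i) F i = \big[op/idx]_(t < M) F (t * p).
Proof.
move=> p_gt0; rewrite big_mkcond -(big_mkord xpredT (fun i => if p %| i then F i else idx)).
rewrite -(big_mkord xpredT (fun t => F (t * p))) big_nat_mul; apply: eq_bigr => t _.
rewrite big_ltn ?ltn_pmul2r // dvdn_mull // big_nat_cond big1 ?Monoid.mulm1 //.
move=> i /andP[/andP[lo hi] _]; case: ifP => // /dvdnP[q i_q].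
by move: lo hi; rewrite i_q !ltn_pmul2r // ltnS => lo; rewrite leqNgt lo.
Qed.

Local Open Scope ring_scope.

Section PrimeWeight.
Variable R : idomainType.

Definition prime_weight (s : seq nat) (k : nat) : R :=
  \prod_(p <- s) ((p %| k)%N%:R * p%:R - 1).

Lemma prime_weight_mulr s p k : all prime s -> prime p -> p \notin s ->
  prime_weight s (k * p) = prime_weight s k.
Proof.
move=> /allP s_prime p_prime p_s; apply: eq_big_seq => q q_s.
have q_neq_p : (q == p) = false by apply: contraNF p_s => /eqP <-.
by rewrite Euclid_dvdM ?s_prime // (dvdn_prime2 (s_prime q q_s) p_prime) q_neq_p orbF.
Qed.

Lemma sum_expr_prim_root n (w : R) N : n.-primitive_root w -> w ^+ N = 1 ->
  \sum_(i < N) w ^+ i = N%:R * (n == 1)%:R.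
Proof.
move=> w_prim wN; have [n1|n_neq1] := eqVneq n 1.
  have w1 : w = 1 by move: (prim_expr_order w_prim); rewrite n1 expr1.
  by rewrite w1 mulr1; under eq_bigr do rewrite expr1n; rewrite sumr_const card_ord.
have w_neq1 : w - 1 != 0.
  by rewrite subr_eq0 -[w]expr1 -(prim_order_dvd w_prim) dvdn1.
have := subrX1 w N; rewrite wN subrr mulr0 => /esym/eqP.
by rewrite mulf_eq0 (negbTE w_neq1) => /eqP.
Qed.

Lemma sum_prime_weight_prim_root s n (w : R) N :
  uniq s -> all prime s -> (\prod_(p <- s) p %| N)%N ->
  n.-primitive_root w -> w ^+ N = 1 ->
  \sum_(i < N) prime_weight s i * w ^+ i = N%:R * (n == \prod_(p <- s) p)%N%:R.
Proof.
elim: s n w N => [|p s IHs] n w N /=.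
  move=> _ _ _ w_prim wN; rewrite big_nil.
  under eq_bigr do rewrite /prime_weight big_nil mul1r.
  exact: sum_expr_prim_root.
move=> /andP[p_s s_uniq] /andP[p_prime s_prime]; rewrite big_cons => sN w_prim wN.
have p_gt0 := prime_gt0 p_prime.
have /divnK NE : (p %| N)%N by apply: dvdn_trans sN; apply: dvdn_mulr.
set M := (N %/ p)%N in NE.
have sM : (\prod_(q <- s) q %| M)%N by rewrite -(dvdn_pmul2r p_gt0) NE mulnC.
have wpM : (w ^+ p) ^+ M = 1 by rewrite -exprM mulnC NE.
have -> : \sum_(i < N) prime_weight (p :: s) i * w ^+ i
   = p%:R * \sum_(i < N | (p %| i)%N) prime_weight s i * w ^+ i
     - \sum_(i < N) prime_weight s i * w ^+ i.
  rewrite [in RHS]big_mkcond mulr_sumr -sumrB; apply: eq_bigr => i _.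
  by rewrite /prime_weight big_cons; case: (p %| i)%N; rewrite ?mulr1n ?mulr0n; ring.
rewrite -NE (big_ord_dvdn (fun i => prime_weight s i * w ^+ i)) // NE.
rewrite (eq_bigr (fun t : 'I_M => prime_weight s t * (w ^+ p) ^+ t)); last first.
  by move=> t _; rewrite prime_weight_mulr // mulnC exprM.
rewrite (IHs _ _ _ s_uniq s_prime sM (exp_prim_root w_prim p) wpM).
rewrite (IHs n w N) // ?(dvdn_trans _ sN) ?dvdn_mull //.
by rewrite divn_gcdn_prime_eq ?prime_dvdn_prod // natrD mulrA -natrM mulnC NE mulrDr addrK.
Qed.

End PrimeWeight.

Lemma sum_shift_modn (R : pzRingType) m (f : nat -> R) (z : R) x :
  z ^+ m = 1 -> (x <= m)%N ->
  \sum_(l < m) f ((l + m - x) %% m)%N * z ^+ l = (\sum_(j < m) f j * z ^+ j) * z ^+ x.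
Proof.
case: m => [|m] zm x_le; first by rewrite !big_ord0 mul0r.
rewrite mulr_suml (reindex_inj (h := fun j : 'I_m.+1 => inZp (j + x))); last first.
  by move=> i j /(congr1 val) /eqP; rewrite /= eqn_modDr !modn_small // => /eqP /val_inj.
apply: eq_bigr => j _ /=.
have -> : (((j + x) %% m.+1 + m.+1 - x) %% m.+1 = j)%N.
  by rewrite -addnBA // modnDml -addnA subnKC // modnDr modn_small.
by rewrite expr_mod // exprD mulrA.
Qed.

Definition inv_weight (d k : nat) : rat :=
  \prod_(p <- primes d | ~~ (p %| k)%N) (- p%:R^-1)
  * \prod_(p <- primes d | (p %| k)%N) (1 - p%:R^-1).

Lemma inv_formulaE m a l : inv_formula m a l = m%:R^-1 * \sum_(d <- divisors m)
  d%:R * \sum_(k < m %/ dprime d) a d ((l + m - k * dprime d) %% m)%N * inv_weight d k.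
Proof.
rewrite /inv_formula; congr (_ * _); apply: eq_bigr => d _; congr (_ * _).
by apply: eq_bigr => k _; rewrite mulrA.
Qed.

Section Evaluation.
Variable R : numFieldType.

Lemma ratr_inv_weight d k :
  ratr (inv_weight d k) = (rad d)%:R^-1 * prime_weight R (primes d) k.
Proof.
have -> : (rad d)%:R^-1 * prime_weight R (primes d) k
    = \prod_(p <- primes d) ((p %| k)%N%:R - p%:R^-1).
  rewrite /rad natr_prod -prodfV -big_split big_seq [RHS]big_seq /=.
  apply: eq_bigr => p; rewrite mem_primes => /andP[/prime_gt0 p_gt0 _].
  by rewrite mulrBr mulrC mulfK ?mulr1 // pnatr_eq0 -lt0n.
rewrite /inv_weight rmorphM !rmorph_prod [RHS](bigID (fun p => p %| k)%N) /= mulrC.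
congr (_ * _); apply: eq_bigr => p.
  by move=> ->; rewrite rmorphB rmorph1 fmorphV rmorph_nat.
by move=> /negbTE ->; rewrite rmorphN fmorphV rmorph_nat sub0r.
Qed.

Lemma sum_inv_weight_prim_root m d d0 (z : R) :
  (0 < m)%N -> (d %| m)%N -> (d0 %| m)%N -> d0.-primitive_root z ->
  d%:R * \sum_(k < m %/ dprime d) ratr (inv_weight d k) * z ^+ (k * dprime d)
  = m%:R * (d == d0)%:R.
Proof.
move=> m_gt0 d_m d0_m z_prim; have d_gt0 := dvdn_gt0 m_gt0 d_m.
have dE := mul_dprime_rad d_gt0.
have dprime_m : (dprime d %| m)%N by apply: dvdn_trans d_m; rewrite -{2}dE dvdn_mulr.
have zm : z ^+ m = 1 by apply/eqP; rewrite -(prim_order_dvd z_prim).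
have wN : (z ^+ dprime d) ^+ (m %/ dprime d) = 1 by rewrite -exprM mulnC divnK.
have rad_N : (rad d %| m %/ dprime d)%N by rewrite dvdn_divRL // mulnC dE.
have := sum_prime_weight_prim_root (primes_uniq d) (all_prime_primes d) rad_N
  (exp_prim_root z_prim (dprime d)) wN.
rewrite divn_gcdn_dprime_eq_rad ?(prim_order_gt0 z_prim) // eq_sym => sumE.
under eq_bigr do rewrite ratr_inv_weight mulnC exprM -mulrA.
rewrite -mulr_sumr sumE -{1}dE natrM -mulrA mulVKf ?pnatr_eq0 -?lt0n ?rad_gt0 //.
rewrite mulrA; congr (_ * _).
by rewrite -[in RHS](divnK dprime_m) natrM mulrC.
Qed.

Lemma sum_inv_formula m a (z : R) : z ^+ m = 1 ->
  \sum_(l < m) ratr (inv_formula m a l) * z ^+ l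
  = m%:R^-1 * \sum_(d <- divisors m) (\sum_(j < m) ratr (a d j) * z ^+ j)
      * (d%:R * \sum_(k < m %/ dprime d) ratr (inv_weight d k) * z ^+ (k * dprime d)).
Proof.
move=> zm.
under eq_bigr do rewrite inv_formulaE rmorphM fmorphV rmorph_nat rmorph_sum -mulrA mulr_suml.
rewrite -mulr_sumr; congr (_ * _).
rewrite exchange_big /=; apply: eq_bigr => d _.
under eq_bigr do rewrite rmorphM rmorph_nat rmorph_sum -mulrA mulr_suml.
rewrite -mulr_sumr exchange_big /= [RHS]mulrCA; congr (_ * _).
rewrite mulr_sumr; apply: eq_bigr => k _.
have k_le : (k * dprime d <= m)%N by rewrite -leq_divRL ?dprime_gt0 // ltnW.
under eq_bigr do rewrite rmorphM mulrAC.
by rewrite -mulr_suml (sum_shift_modn (fun j => ratr (a d j))) // -mulrA (mulrC (z ^+ _)).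
Qed.

End Evaluation.

Theorem proposition5p3 (m : nat) (hm : (0 < m)%N) (zeta : nat -> algC)
    (hzeta : forall d, (d %| m)%N -> d.-primitive_root (zeta d))
    (a : nat -> nat -> rat) :
  forall d, (d %| m)%N ->
    omega_comp m zeta (inv_formula m a) d = omega_comp m zeta (a d) d.
Proof.
move=> d0 d0_m; have z_prim := hzeta d0 d0_m.
have zm : zeta d0 ^+ m = 1 by apply/eqP; rewrite -(prim_order_dvd z_prim).
rewrite /omega_comp sum_inv_formula //.
rewrite (eq_big_seq (fun d => omega_comp m zeta (a d) d0 * (m%:R * (d == d0)%:R))); last first.
  by move=> d; rewrite -dvdn_divisors // => d_m; rewrite (sum_inv_weight_prim_root hm d_m d0_m).
rewrite (bigD1_seq d0) ?divisors_uniq -?dvdn_divisors //= big1 => [|d /negbTE ->]; last first.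
  by rewrite !mulr0.
by rewrite eqxx mulr1 addr0 mulrCA mulVf ?mulr1 // pnatr_eq0 -lt0n.
Qed.
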